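(* Let $M$ be a compact Riemannian manifold with Riemannian volume measure $\operatorname{Leb}$, let $f\colon M\to M$ be a $C^\infty$ map, and let $(U_n)_{n\ge1}$ be a concatenated collection (see context). If $$\sum_{n\ge1}\sum_{j=0}^{n-1}\operatorname{Leb}\big(f^j(u^{-1}(n))\big)<\infty,$$ then for $\operatorname{Leb}$-almost every $x\in M$, $$\sup\Big\{u(y)\colon y\in \bigcup_{n\ge1}U_n \text{ and } x\in C(y)\Big\}<\infty.$$
   Context: A collection $(U_n)_{n\ge1}$ of measurable subsets of $M$ whose union has full Lebesgue measure is called a concatenated collection if for all $n,m\ge1$: $x\in U_n$ and $f^n(x)\in U_m$ imply $x\in U_{n+m}$. For $x\in\bigcup_{n\ge1}U_n$, $u(x)$ is the minimum $n\in\mathbb N$ with $x\in U_n$, and $u^{-1}(n)=\{x\in\bigcup_k U_k\colon u(x)=n\}$. The chain generated by $x\in\bigcup_{n\ge1}U_n$ is $C(x)=\{x,f(x),\dots,f^{u(x)-1}(x)\}$. *)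

From HB Require Import structures.
From mathcomp Require Import all_boot all_order all_algebra.
From mathcomp Require Import all_classical all_reals all_analysis.
Set Implicit Arguments. Unset Strict Implicit. Unset Printing Implicit Defensive.
Import Order.TTheory GRing.Theory Num.Theory.
Local Open Scope classical_set_scope.

Section Concat.
Context {T : Type}.

Definition Ubig (U : nat -> set T) : set T := [set x | exists n, (0 < n)%N /\ U n x].

(* concatenated collection (measurability / full-measure conditions are stated in the theorem) *)
Definition concatenated (f : T -> T) (U : nat -> set T) : Prop :=
  forall (n m : nat) (x : T), (0 < n)%N -> (0 < m)%N ->
    U n x -> U m (iter n f x) -> U (n + m) x.

(* u(x) = min { n >= 1 | x in U_n } for x in the union (value 0 outside, irrelevant) *)
Definition u (U : nat -> set T) (x : T) : nat :=
  match pselect (exists n, (0 < n)%N && `[< U n x >]) with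
  | left h => ex_minn h
  | right _ => 0%N
  end.

Definition uinv (U : nat -> set T) (n : nat) : set T := [set x | Ubig U x /\ u U x = n].

Definition chain (f : T -> T) (U : nat -> set T) (y : T) : set T :=
  [set iter j f y | j in [set j : nat | (j < u U y)%N]].

End Concat.

From HB Require Import structures.
From mathcomp Require Import all_boot all_order all_algebra.
From mathcomp Require Import all_classical all_reals all_analysis.
Import Order.TTheory GRing.Theory Num.Theory.
Local Open Scope classical_set_scope.
Local Open Scope ring_scope.
Local Open Scope ereal_scope.

(* Borel-Cantelli.  Let F_n be the union of the chains generated by points of
   u^{-1}(n), i.e. of the sets f^j(u^{-1}(n)) for j < n.  The hypothesis bounds
   the sum of the measures of the F_n, so almost every x lies in only finitely
   many F_n.  A chain of length u(y) through x puts x in F_{u(y)}, hence the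
   lengths of the chains through such an x are bounded. *)

Lemma not_lim_sup_set_bounded {T : Type} {F : (set T)^nat} {x : T} :
  ~ lim_sup_set F x -> exists N, forall n, F n x -> (n < N)%N.
Proof.
move=> Fx; apply: contrapT => unbounded; apply: Fx => N _.
apply: contrapT => notF; apply: unbounded; exists N => n Fnx.
by rewrite ltnNge; apply/negP => Nn; apply: notF; exists n.
Qed.

Section chain_union.
Context {T : Type} (f : T -> T) (U : nat -> set T).

Definition chain_union (n : nat) : set T :=
  \big[setU/set0]_(j < n) (iter j f @` uinv U n).

Lemma chain_union_u (y x : T) :
  Ubig U y -> chain f U y x -> chain_union (u U y) x.
Proof.
move=> Uy [j /= ju <-].
rewrite /chain_union -(bigcup_mkord _ (fun j => iter j f @` uinv U (u U y))).
by exists j => //; exists y.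
Qed.

End chain_union.

Section chain_union_measure.
Context {d : measure_display} {T : measurableType d} {R : realType}.
Variables (mu : {measure set T -> \bar R}) (f : T -> T) (U : nat -> set T).
Hypothesis mfUinv : forall n j, (0 < n)%N -> (j < n)%N ->
  measurable (iter j f @` uinv U n).

Lemma measurable_chain_union n : measurable (chain_union f U n).
Proof.
apply: bigsetU_measurable => j _; apply: (mfUinv _ _ _ (ltn_ord j)).
exact: leq_ltn_trans (ltn_ord j).
Qed.

Lemma measure_chain_union_le n :
  mu (chain_union f U n) <= \sum_(0 <= j < n) mu (iter j f @` uinv U n).
Proof.
rewrite big_mkord.
apply: (@Boole_inequality _ _ _ mu (fun j => iter j f @` uinv U n) n) => j jn.
by apply: (mfUinv _ _ _ jn); exact: leq_ltn_trans jn.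
Qed.

Lemma measure_lim_sup_chain_union :
  \sum_(1 <= n <oo) (\sum_(0 <= j < n) mu (iter j f @` uinv U n)) < +oo ->
  mu (lim_sup_set (chain_union f U)) = 0.
Proof.
move=> sum_finite; apply: lim_sup_set_cvg0; first exact: measurable_chain_union.
apply: le_lt_trans sum_finite.
rewrite (nneseries_split 0 1) //= add0n big_nat1 /chain_union big_ord0 measure0 add0e.
apply: lee_nneseries => [n _ _|n _]; first exact: measure_ge0.
exact: measure_chain_union_le.
Qed.

End chain_union_measure.

Theorem lemma1 (d : measure_display) (M : measurableType d) (R : realType)
  (Leb : {measure set M -> \bar R}) (f : M -> M) (U : nat -> set M) :
  measurable_fun setT f ->
  (forall n, (0 < n)%N -> measurable (U n)) ->
  Leb.-negligible (~` Ubig U) ->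
  concatenated f U ->
  (forall n j, (0 < n)%N -> (j < n)%N -> measurable (iter j f @` uinv U n)) ->
  \sum_(1 <= n <oo) (\sum_(0 <= j < n) Leb (iter j f @` uinv U n)) < +oo ->
  {ae Leb, forall x : M, exists B : nat,
      forall y, Ubig U y -> chain f U y x -> (u U y <= B)%N}.
Proof.
move=> _ _ _ _ mfUinv sum_finite.
exists (lim_sup_set (chain_union f U)); split.
- apply: bigcap_measurable => // k _; apply: bigcup_measurable => n _.
  exact: measurable_chain_union.
- exact: measure_lim_sup_chain_union.
move=> x /= unbounded; apply: contrapT => notlim; apply: unbounded.
have [N bounded] := not_lim_sup_set_bounded notlim.
by exists N => y Uy yx; apply/ltnW/bounded; exact: chain_union_u.
Qed.
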